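(* Let $0\le p,q<1$, $\theta\in(0,1)$ irrational, $N$ a positive integer. Let $\mathcal O(S^3_{pq\theta})$ be the universal complex unital $*$-algebra generated by $a,b$ subject to $ab=e^{2\pi i\theta}ba$, $ab^*=e^{-2\pi i\theta}b^*a$, $a^*a-paa^*=1-p$, $b^*b-qbb^*=1-q$, $(1-aa^* )(1-bb^* )=0$, with right $\mathcal O(U(1))$-coaction $x\mapsto x_{(0)}\otimes x_{(1)}$ determined by $a\mapsto a\otimes u$, $b\mapsto b\otimes u$ (a $*$-algebra map), and corresponding $U(1)$-action $\alpha_\lambda(a)=\lambda a$, $\alpha_\lambda(b)=\lambda b$. Let $\mathbb Z/N\mathbb Z$ act on $\mathcal O(S^3_{pq\theta})\otimes\mathcal O(U(1))$ by $\tilde\alpha_{\zeta}(x\otimes h)=\alpha_\zeta(x)\otimes h(\,\cdot\,\zeta^{-1})$ for $\zeta=e^{2\pi ik/N}$. Let $\psi:\mathcal O(U(1))\to\mathcal O(U(1))$ be the injective $*$-Hopf algebra map $u\mapsto u^N$. Then the maps $$\phi(x\otimes h)=x_{(0)}\otimes x_{(1)}\psi(h),\qquad \phi^{-1}\Big(\sum_i x^i\otimes h^i\Big)=\sum_i x^i_{(0)}\otimes\psi^{-1}\big(S(x^i_{(1)})h^i\big)$$ are well-defined mutually inverse $*$-algebra isomorphisms between $\mathcal O(S^3_{pq\theta})\otimes\mathcal O(U(1))$ and the fixed-point algebra $(\mathcal O(S^3_{pq\theta})\otimes\mathcal O(U(1)))^{\mathbb Z/N\mathbb Z}$.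
   Context: $\mathcal O(U(1))=\mathbb C[u,u^{-1}]$ is the Hopf $*$-algebra generated by a group-like unitary $u$, with antipode $S(u)=u^{-1}$; its elements are regarded as functions on $U(1)$. The image of $\psi$ is $\{h\in\mathcal O(U(1))\mid \pi(h_{(1)})\otimes h_{(2)}=1\otimes h\}$ where $\pi(u)=\tilde u$ is the surjection onto $\mathcal O(\mathbb Z/N\mathbb Z)$, $\tilde u^N=1$. Tensor products are algebraic over $\mathbb C$. *)

From HB Require Import structures.
From mathcomp Require Import all_boot all_order all_algebra.
From mathcomp Require Import finmap.
From mathcomp Require Import complex.
From mathcomp Require Import reals trigo.
Set Implicit Arguments. Unset Strict Implicit. Unset Printing Implicit Defensive.
Import Order.TTheory GRing.Theory Num.Theory.
Local Open Scope ring_scope.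
Local Open Scope complex_scope.


Section Defs.
Variable R : realType.
Local Notation C := R[i].

Definition expi (t : R) : C := (cos t +i* sin t).


Definition is_star (A : algType C) (s : A -> A) : Prop :=
  [/\ forall x y, s (x + y) = s x + s y,
      forall (c : C) x, s (c *: x) = (c^*)%C *: s x,
      forall x y, s (x * y) = s y * s x & forall x, s (s x) = x].

Definition is_star_morph (A B : algType C) (sA : A -> A) (sB : B -> B)
  (f : A -> B) : Prop :=
  [/\ forall x y, f (x + y) = f x + f y,
      forall (c : C) x, f (c *: x) = c *: f x,
      forall x y, f (x * y) = f x * f y,
      f 1 = 1 & forall x, f (sA x) = sB (f x)].

Definition S3_rel (p q th : R) (A : algType C) (s : A -> A) (a b : A) : Prop :=
  [/\ a * b = expi (2 * pi * th) *: (b * a),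
      a * s b = expi (- (2 * pi * th)) *: (s b * a),
      s a * a - p%:C *: (a * s a) = (1 - p)%:C *: 1,
      s b * b - q%:C *: (b * s b) = (1 - q)%:C *: 1
    & (1 - a * s a) * (1 - b * s b) = 0].


(* The algebraic tensor product A (x) O(U(1)) = A (x) C[u,u^-1] is
   identified with finitely supported functions int -> A:
   F  <->  \sum_m F m (x) u^m.                                         *)
Definition tens (A : algType C) := {fsfun int -> A with 0}.

Section Tensor.
Variables (A : algType C) (s : A -> A).

Definition etens (x : A) (m : int) : tens A := [fsfun k in [fset m]%fset => x].
Definition tzero : tens A := [fsfun k in fset0 => (0 : A)].
Definition tadd (F G : tens A) : tens A :=
  [fsfun k in (finsupp F `|` finsupp G)%fset => F k + G k].
Definition tscale (c : C) (F : tens A) : tens A :=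
  [fsfun k in finsupp F => c *: F k].
Definition tone : tens A := etens 1 0.
(* (x (x) h) (y (x) k) = x y (x) h k *)
Definition tmul (F G : tens A) : tens A :=
  [fsfun k in [fset (i + j)%R | i in finsupp F, j in finsupp G]%fset =>
     \sum_(i <- finsupp F) \sum_(j <- finsupp G | (i + j)%R == k) F i * G j].
(* (x (x) u^m)^* = x^* (x) u^-m *)
Definition tstar (F : tens A) : tens A :=
  [fsfun k in [fset (- i)%R | i in finsupp F]%fset => s (F (- k))].
Definition tsum (I : Type) (r : seq I) (F : I -> tens A) : tens A :=
  \big[tadd/tzero]_(i <- r) F i.
End Tensor.

Definition is_coaction (A : algType C) (s : A -> A) (a b : A)
  (delta : A -> tens A) : Prop :=
  [/\ forall x y, delta (x + y) = tadd (delta x) (delta y),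
      forall (c : C) x, delta (c *: x) = tscale c (delta x),
      forall x y, delta (x * y) = tmul (delta x) (delta y),
      delta 1 = tone A &
      forall x, delta (s x) = tstar s (delta x)] /\
  delta a = etens a 1 /\ delta b = etens b 1.

Definition is_universal_S3 (p q th : R) (A : algType C) (s : A -> A) (a b : A)
  : Prop :=
  [/\ is_star s, S3_rel p q th s a b &
      forall (B : algType C) (sB : B -> B) (a' b' : B),
        is_star sB -> S3_rel p q th sB a' b' ->
        (exists f : A -> B, is_star_morph s sB f /\ f a = a' /\ f b = b') /\
        (forall f g : A -> B, is_star_morph s sB f -> is_star_morph s sB g ->
           f a = g a -> f b = g b -> f =1 g)].

Section Maps.
Variables (A : algType C) (s : A -> A) (delta : A -> tens A) (N : nat).

(* U(1)-action: alpha_lambda(x) = x_(0) x_(1)(lambda) *)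
Definition alpha (l : C) (x : A) : A :=
  \sum_(n <- finsupp (delta x)) (l ^ n) *: delta x n.

(* Z/NZ-action on A (x) O(U(1)): x (x) h |-> alpha_zeta x (x) h( . zeta^-1),
   and (u^m)(z zeta^-1) = zeta^-m z^m. *)
Definition zeta (k : nat) : C := expi (2 * pi * k%:R / N%:R).
Definition talpha (z : C) (F : tens A) : tens A :=
  [fsfun m in finsupp F => (z ^ (- m)) *: alpha z (F m)].
Definition fixed (F : tens A) : Prop :=
  forall k : 'I_N, talpha (zeta k) F = F.

(* id (x) psi, psi(u^m) = u^(N m) *)
Definition tpsi (F : tens A) : tens A :=
  [fsfun k in [fset ((N%:Z) * m)%R | m in finsupp F]%fset =>
     F ((k %/ N%:Z)%Z)].
Definition phi (F : tens A) : tens A :=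
  tsum (finsupp F) (fun m => tmul (delta (F m)) (tpsi (etens 1 m))).
(* sum x_(0) (x) S(x_(1)) h, before applying psi^-1; S(u^n) = u^-n *)
Definition phi_pre (F : tens A) : tens A :=
  tsum (finsupp F) (fun m =>
    tsum (finsupp (delta (F m))) (fun n => etens (delta (F m) n) (m - n)%R)).
(* id (x) psi^-1 on A (x) psi(O(U(1))): coefficient of u^k is that of u^(N k) *)
Definition tpsi_inv (G : tens A) : tens A :=
  [fsfun k in [fset ((m %/ N%:Z)%Z) | m in finsupp G]%fset => G ((N%:Z) * k)%R].
Definition phi_inv (F : tens A) : tens A := tpsi_inv (phi_pre F).

Definition is_tmorph (P : tens A -> Prop) (f : tens A -> tens A) : Prop :=
  [/\ forall F G, P F -> P G -> f (tadd F G) = tadd (f F) (f G),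
      forall (c : C) F, P F -> f (tscale c F) = tscale c (f F),
      forall F G, P F -> P G -> f (tmul F G) = tmul (f F) (f G),
      f (tone A) = tone A &
      forall F, P F -> f (tstar s F) = tstar s (f F)].
End Maps.
End Defs.

(* The coaction makes O(S^3_{pq theta}) a Z-graded *-algebra: the elements that
   are the sum of their homogeneous components x_(0) x_(1)(n) form a
   *-subalgebra containing a and b, hence everything by universality.  So every
   tensor is a finite sum of elementary tensors x (x) u^m with x homogeneous of
   some degree n.  On these, phi (x (x) u^m) = x (x) u^(n + N m); the generator
   e^(2 pi i/N) of Z/NZ multiplies x (x) u^m by e^(2 pi i (n - m)/N), so the
   fixed tensors are the sums of those with N | m - n, and
   phi^-1 (x (x) u^m) = x (x) u^((m - n)/N).  Every claim then reduces to an
   identity between exponents. *)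

From HB Require Import structures.
From mathcomp Require Import all_boot all_order all_algebra.
From mathcomp Require Import finmap complex reals trigo boolp classical_sets.
From mathcomp Require Import ring lra.
Import Order.TTheory GRing.Theory Num.Theory.
Local Open Scope ring_scope.
Set Implicit Arguments. Unset Strict Implicit. Unset Printing Implicit Defensive.

Section FinitelySupportedSums.
Variable V : zmodType.
Implicit Types (f g : int -> V) (r : seq int).

Definition supported_on f r := forall i, i \notin r -> f i = 0.

Lemma supported_on_sub f r r' : supported_on f r -> {subset r <= r'} -> supported_on f r'.
Proof. by move=> fr rr' i ir'; apply: fr; apply: contra ir'; apply: rr'. Qed.

Lemma supported_on_catl f r r' : supported_on f r -> supported_on f (r ++ r').
Proof. by move=> fr; apply: supported_on_sub fr _ => i; rewrite mem_cat => ->. Qed.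

Lemma supported_on_catr f r r' : supported_on f r' -> supported_on f (r ++ r').
Proof. by move=> fr; apply: supported_on_sub fr _ => i; rewrite mem_cat orbC => ->. Qed.

Lemma big_undup_supported f r r' : supported_on f r -> {subset r <= r'} ->
  \sum_(i <- undup r') f i = \sum_(i <- undup r) f i.
Proof.
move=> fr rr'.
rewrite (bigID (mem r)) /= [X in _ + X]big1 ?addr0; last by move=> i /fr.
rewrite -big_filter; apply/perm_big/uniq_perm; rewrite ?filter_uniq ?undup_uniq //.
by move=> i; rewrite mem_filter !mem_undup; apply/andP/idP => [[]//|ir]; split; rewrite ?rr'.
Qed.

(* Junk value [0] when the support of [f] is infinite. *)
Definition isum f : V := \sum_(i <- undup (xget [::] (supported_on f))) f i.

Lemma isumE f r : supported_on f r -> isum f = \sum_(i <- undup r) f i.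
Proof.
move=> fr; rewrite /isum; have fr' := xgetI [::] fr.
set r' := xget _ _ in fr' *.
have sub_l : {subset r' <= r' ++ r} by move=> i ir; rewrite mem_cat ir.
have sub_r : {subset r <= r' ++ r} by move=> i ir; rewrite mem_cat ir orbT.
by rewrite -(big_undup_supported fr' sub_l) (big_undup_supported fr sub_r).
Qed.

Lemma isumE_uniq f r : supported_on f r -> uniq r -> isum f = \sum_(i <- r) f i.
Proof. by move=> fr ur; rewrite (isumE fr) undup_id. Qed.

Lemma eq_isum f g : f =1 g -> isum f = isum g.
Proof. by move=> /funext ->. Qed.

Lemma isum0 : isum (fun=> 0) = 0.
Proof. by rewrite (@isumE _ [::]) ?big_nil. Qed.

Lemma isumD f g rf rg : supported_on f rf -> supported_on g rg ->
  isum (fun i => f i + g i) = isum f + isum g.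
Proof.
move=> /(supported_on_catl (r' := rg)) frg /(supported_on_catr (r := rf)) grg.
rewrite (isumE frg) (isumE grg) -big_split /=; apply: isumE => i ir.
by rewrite frg ?grg ?addr0.
Qed.

Lemma isum1 f c : (forall i, i != c -> f i = 0) -> isum f = f c.
Proof. by move=> fc; rewrite (@isumE _ [:: c]) ?big_seq1 // => i; rewrite inE; apply: fc. Qed.

Lemma isum_reindex f (h h' : int -> int) r : cancel h h' -> cancel h' h ->
  supported_on f r -> isum (fun i => f (h i)) = isum f.
Proof.
move=> hK h'K fr; rewrite (isumE fr) (@isumE _ [seq h' i | i <- r]).
  rewrite undup_map_inj ?big_map; last exact: can_inj h'K.
  by apply: eq_bigr => i _ /=; rewrite h'K.
by move=> i ir; apply: fr; apply: contra ir => ir; apply/mapP; exists (h i); rewrite ?hK.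
Qed.

Lemma exchange_isum (g : int -> int -> V) r1 r2 :
  (forall i j, i \notin r1 -> g i j = 0) -> (forall i j, j \notin r2 -> g i j = 0) ->
  isum (fun i => isum (g i)) = isum (fun j => isum (g^~ j)).
Proof.
move=> g1 g2.
rewrite (eq_isum (g := fun i => \sum_(j <- undup r2) g i j)); last first.
  by move=> i; apply: isumE => j; apply: g2.
rewrite (eq_isum (f := fun j => isum (g^~ j))
                 (g := fun j => \sum_(i <- undup r1) g i j)); last first.
  by move=> j; apply: isumE => i; apply: g1.
rewrite (@isumE _ r1); last by move=> i ir; rewrite big1 // => j _; apply: g1.
rewrite (@isumE _ r2); first exact: exchange_big.
by move=> j jr; rewrite big1 // => i _; apply: g2.
Qed.

End FinitelySupportedSums.

Lemma isum_morph (V W : zmodType) (L : V -> W) f r : {morph L : x y / x + y} ->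
  supported_on f r -> isum (fun i => L (f i)) = L (isum f).
Proof.
move=> LD fr; have L0 : L 0 = 0 by apply: (@addrI _ (L 0)); rewrite -LD !addr0.
by rewrite (isumE fr) (@isumE _ _ r) ?(big_morph L LD L0) // => i /fr /= ->.
Qed.

Section Tensors.
Variables (R : realType) (A : algType R[i]).
Local Notation T := (tens A).
Implicit Types (F G H : T) (x y : A).

Lemma tensP F G : F =1 G -> F = G.
Proof. by move/fsfunP. Qed.

Lemma tens_dflt F k : k \notin finsupp F -> F k = 0.
Proof. exact: fsfun_dflt. Qed.

Lemma tens_supported F : supported_on F (finsupp F).
Proof. exact: tens_dflt. Qed.

Lemma etensE x m k : etens x m k = if k == m then x else 0.
Proof. by rewrite fsfunE inE. Qed.

Lemma tzeroE k : tzero A k = 0.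
Proof. by rewrite fsfunE. Qed.

Lemma taddE F G k : tadd F G k = F k + G k.
Proof.
rewrite fsfunE in_fsetU; case: ifP => // /norP[/tens_dflt -> /tens_dflt ->].
by rewrite addr0.
Qed.

Lemma tscaleE c F k : tscale c F k = c *: F k.
Proof. by rewrite fsfunE; case: ifP => // /negbT /tens_dflt ->; rewrite scaler0. Qed.

Lemma tsumE (I : Type) (r : seq I) (E : I -> T) k : tsum r E k = \sum_(i <- r) E i k.
Proof.
by elim: r => [|i r IH]; rewrite /tsum ?big_nil ?tzeroE // !big_cons taddE -IH.
Qed.

Lemma tmulE F G k : tmul F G k = isum (fun i => F i * G (k - i)).
Proof.
have FG_supp : supported_on (fun i => F i * G (k - i)) (finsupp F).
  by move=> i /tens_dflt ->; rewrite mul0r.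
rewrite fsfunE (isumE_uniq FG_supp (fset_uniq _)).
have inner i : \sum_(j <- finsupp G | i + j == k) F i * G j = F i * G (k - i).
  rewrite big_mkcond -(@isumE_uniq _ (fun j => if i + j == k then F i * G j else 0)).
  - rewrite (isum1 (c := k - i)); first by rewrite addrC subrK eqxx.
    by move=> j /negP jk; case: eqP => // ijk; case: jk; rewrite -ijk addrC addKr.
  - by move=> j /tens_dflt ->; rewrite mulr0 if_same.
  - exact: fset_uniq.
case: ifP => [_|kF]; first by apply: eq_bigr => i _; apply: inner.
symmetry; apply: big1_seq => i /andP[_ iF].
case: (boolP (k - i \in finsupp G)) => [kiG|/tens_dflt ->]; last by rewrite mulr0.
move/negP: kF; case; apply/imfset2P; exists i => //; exists (k - i) => //.
by rewrite addrC subrK.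
Qed.

Lemma tmul_etensr F y j k : tmul F (etens y j) k = F (k - j) * y.
Proof.
rewrite tmulE (isum1 (c := k - j)); first by rewrite etensE opprB addrCA subrr addr0 eqxx.
move=> i ij; rewrite etensE; case: eqP => [ki|]; last by rewrite mulr0.
by case/eqP: ij; rewrite -ki opprB addrCA subrr addr0.
Qed.

Lemma etens0 m : etens (0 : A) m = tzero A.
Proof. by apply: tensP => k; rewrite etensE tzeroE if_same. Qed.

Lemma tadd_etens x y m : tadd (etens x m) (etens y m) = etens (x + y) m.
Proof. by apply: tensP => k; rewrite taddE !etensE; case: ifP; rewrite ?addr0. Qed.

Lemma tscale_etens c x m : tscale c (etens x m) = etens (c *: x) m.
Proof. by apply: tensP => k; rewrite tscaleE !etensE; case: ifP; rewrite ?scaler0. Qed.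

Lemma tsum_etens (I : Type) (r : seq I) (f : I -> A) m :
  tsum r (fun i => etens (f i) m) = etens (\sum_(i <- r) f i) m.
Proof.
apply: tensP => k; rewrite tsumE etensE; case: ifP => km.
  by apply: eq_bigr => i _; rewrite etensE km.
by apply: big1 => i _; rewrite etensE km.
Qed.

Lemma tmul_etens x y i j : tmul (etens x i) (etens y j) = etens (x * y) (i + j).
Proof.
apply: tensP => k; rewrite tmul_etensr !etensE subr_eq.
by case: ifP; rewrite ?mul0r.
Qed.

Lemma tmul0l G : tmul (tzero A) G = tzero A.
Proof.
apply: tensP => k; rewrite tmulE tzeroE -[RHS]isum0.
by apply: eq_isum => i; rewrite tzeroE mul0r.
Qed.

Lemma tmul0r F : tmul F (tzero A) = tzero A.
Proof.
apply: tensP => k; rewrite tmulE tzeroE -[RHS]isum0.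
by apply: eq_isum => i; rewrite tzeroE mulr0.
Qed.

Lemma tmulDl F G H : tmul (tadd F G) H = tadd (tmul F H) (tmul G H).
Proof.
apply: tensP => k.
have supp F' : supported_on (fun i => F' i * H (k - i)) (finsupp F').
  by move=> i /tens_dflt ->; rewrite mul0r.
rewrite taddE !tmulE -(isumD (supp F) (supp G)).
by apply: eq_isum => i; rewrite taddE mulrDl.
Qed.

Lemma tmulDr F G H : tmul F (tadd G H) = tadd (tmul F G) (tmul F H).
Proof.
apply: tensP => k.
have supp (G' : T) : supported_on (fun i => F i * G' (k - i)) (finsupp F).
  by move=> i /tens_dflt ->; rewrite mul0r.
rewrite taddE !tmulE -(isumD (supp G) (supp H)).
by apply: eq_isum => i; rewrite taddE mulrDr.
Qed.

Lemma tsum_ind (P : T -> Prop) (I : Type) (r : seq I) (E : I -> T) :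
  P (tzero A) -> (forall F G, P F -> P G -> P (tadd F G)) ->
  (forall i, P (E i)) -> P (tsum r E).
Proof.
move=> P0 PD PE; rewrite /tsum; elim: r => [|i r IH]; first by rewrite big_nil.
by rewrite big_cons; apply: PD.
Qed.

Section Star.
Variable s : A -> A.
Hypothesis sD : {morph s : x y / x + y}.

Lemma star0 : s 0 = 0.
Proof. by apply: (@addrI _ (s 0)); rewrite -sD !addr0. Qed.

Lemma tstarE F k : tstar s F k = s (F (- k)).
Proof.
rewrite fsfunE; case: ifP => // /negbT kF.
rewrite tens_dflt ?star0 //; apply: contra kF => kF.
by rewrite -[k]opprK in_imfset.
Qed.

Lemma tstar_etens x m : tstar s (etens x m) = etens (s x) (- m).
Proof. by apply: tensP => k; rewrite tstarE !etensE eqr_oppLR; case: ifP; rewrite ?star0. Qed.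

Lemma tstar0 : tstar s (tzero A) = tzero A.
Proof. by apply: tensP => k; rewrite tstarE !tzeroE star0. Qed.

Lemma tstarD F G : tstar s (tadd F G) = tadd (tstar s F) (tstar s G).
Proof. by apply: tensP => k; rewrite !(taddE, tstarE) sD. Qed.

End Star.

Section Psi.
Variable N : nat.
Hypothesis N_gt0 : (0 < N)%N.

Lemma tpsiE F k : tpsi N F k = if (N%:Z %| k)%Z then F (k %/ N%:Z)%Z else 0.
Proof.
rewrite fsfunE; case: ifP => [/imfsetP[m _ ->]|kF]; first by rewrite dvdz_mulr.
case: ifP => // dvNk; rewrite tens_dflt //; apply: contraFN kF => kF.
by rewrite -(divzK dvNk) mulrC in_imfset.
Qed.

Lemma tpsi_etens x m : tpsi N (etens x m) = etens x (N%:Z * m).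
Proof.
have NZ0 : N%:Z != 0 by rewrite eqz_nat -lt0n.
apply: tensP => k; rewrite tpsiE !etensE; case: ifP => [dvNk|/negbT Nk].
  by rewrite -{2}(divzK dvNk) mulrC (inj_eq (mulfI NZ0)).
by case: eqP => // km; rewrite km dvdz_mulr in Nk.
Qed.

Lemma tpsi_invE G k : tpsi_inv N G k = G (N%:Z * k).
Proof.
have NZ0 : N%:Z != 0 by rewrite eqz_nat -lt0n.
rewrite fsfunE; case: ifP => // /negbT kG; rewrite tens_dflt //; apply: contra kG => kG.
by rewrite -[k in k \in _](mulKz k NZ0); apply: (in_imfset _ (fun m => m %/ N%:Z)%Z kG).
Qed.

End Psi.
End Tensors.

Arguments tens_supported {R A} F.

Section RootsOfUnity.
Variable R : realType.
Implicit Types t u : R.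

Lemma expi0 : expi (0 : R) = 1.
Proof. by rewrite /expi cos0 sin0. Qed.

Lemma expiD t u : expi (t + u) = expi t * expi u.
Proof. by rewrite /expi cosD sinD; apply/eqP; rewrite eq_complex /= !eqxx addrC eqxx. Qed.

Lemma expi_neq0 t : expi t != 0.
Proof.
apply: contraTneq isT => e0; have := expiD t (- t).
by rewrite subrr expi0 e0 mul0r => /eqP; rewrite oner_eq0.
Qed.

Lemma expiN t : expi (- t) = (expi t)^-1.
Proof. by apply: (mulfI (expi_neq0 t)); rewrite -expiD subrr expi0 mulfV ?expi_neq0. Qed.

Lemma expiMn t n : expi t ^+ n = expi (n%:R * t).
Proof.
elim: n => [|n IH]; first by rewrite mul0r expi0.
by rewrite exprS IH -expiD -natr1 mulrDl mul1r addrC.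
Qed.

Lemma expiMz t (z : int) : expi t ^ z = expi (z%:~R * t).
Proof. by case: z => n; rewrite ?NegzE ?intrN ?mulNr ?expiN -expiMn. Qed.

Lemma expi_2piz (z : int) : expi (z%:~R * (pi *+ 2)) = 1 :> R[i].
Proof. by rewrite -expiMz /expi cos2pi sin2pi exp1rz. Qed.

Lemma expi_neq1 t : 0 < t < pi *+ 2 -> expi t != 1.
Proof.
move=> t_bd; apply: contraTneq isT => /(congr1 (@complex.Re R)) /= cos_t1.
have t2 : 0 < t / 2 < pi by rewrite mulr2n in t_bd; apply/andP; split; lra.
have cos_half : cos t = cos (t / 2) ^+ 2 *+ 2 - 1 by rewrite -cos_mulr2n mulr2n -splitr.
have := sin_gt0_pi t2; have := cos2Dsin2 (t / 2); rewrite cos_t1 mulr2n in cos_half; nra.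
Qed.

Variable N : nat.
Hypothesis N_gt0 : (0 < N)%N.

Lemma zeta_unit k : zeta R N k \is a GRing.unit.
Proof. by rewrite unitfE expi_neq0. Qed.

Lemma zeta_expz_dvd k (j : int) : (N%:Z %| j)%Z -> zeta R N k ^ j = 1.
Proof.
move=> /divzK <-; rewrite expiMz.
rewrite -(expi_2piz ((j %/ N%:Z)%Z * k%:Z)); congr expi.
have NR0 : (N%:R : R) != 0 by rewrite pnatr_eq0 -lt0n.
by rewrite !intrM /= mulr2n; field.
Qed.

Lemma zeta1_expz_ndvd (j : int) : ~~ (N%:Z %| j)%Z -> zeta R N 1 ^ j != 1.
Proof.
move=> Nj; have NZ0 : N%:Z != 0 by rewrite eqz_nat -lt0n.
set r := (j %% N%:Z)%Z.
have r_gt0 : 0 < r by rewrite lt_def modz_ge0 // andbT; apply: contra Nj => /eqP/dvdz_mod0P.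
have r_ltN : r < N%:Z by rewrite ltz_pmod ?ltz_nat.
rewrite (divz_eq j N%:Z) exprzDr ?zeta_unit // zeta_expz_dvd ?dvdz_mull // mul1r expiMz.
have NR0 : (0 : R) < N%:R by rewrite ltr0n.
have -> : r%:~R * (2 * pi * 1%:R / N%:R) = (r%:~R / N%:R * pi) *+ 2 :> R.
  by rewrite mulr2n; field; rewrite gt_eqF.
have r_bd : 0 < (r%:~R / N%:R : R) < 1.
  by rewrite -(ltr_int R) in r_ltN; rewrite divr_gt0 ?ltr0z //= ltr_pdivrMr // mul1r.
apply: expi_neq1; have := pi_gt0 R; move: r_bd; set x := _ / _; rewrite !mulr2n; nra.
Qed.

End RootsOfUnity.

(** * The grading induced by the coaction *)

Section Coaction.
Variables (R : realType) (p q th : R) (A : algType R[i]) (s : A -> A) (a b : A)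
  (delta : A -> tens A).
Hypothesis univ : is_universal_S3 p q th s a b.
Hypothesis coac : is_coaction s a b delta.
Implicit Types x y : A.

Lemma starD : {morph s : x y / x + y}. Proof. by case: univ => -[]. Qed.

Lemma deltaD x y : delta (x + y) = tadd (delta x) (delta y). Proof. by case: coac => -[]. Qed.
Lemma deltaZ c x : delta (c *: x) = tscale c (delta x). Proof. by case: coac => -[]. Qed.
Lemma deltaM x y : delta (x * y) = tmul (delta x) (delta y). Proof. by case: coac => -[]. Qed.
Lemma delta1 : delta 1 = etens 1 0. Proof. by case: coac => -[]. Qed.
Lemma deltaS x : delta (s x) = tstar s (delta x). Proof. by case: coac => -[]. Qed.
Lemma delta_a : delta a = etens a 1. Proof. by case: coac => _ []. Qed.
Lemma delta_b : delta b = etens b 1. Proof. by case: coac => _ []. Qed.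

Lemma delta0 : delta 0 = tzero A.
Proof. by rewrite -(scale0r 0) deltaZ; apply: tensP => k; rewrite tscaleE tzeroE scale0r. Qed.

Lemma delta0E n : delta 0 n = 0.
Proof. by rewrite delta0 tzeroE. Qed.

Lemma delta_sum (I : Type) (r : seq I) (f : I -> A) :
  delta (\sum_(i <- r) f i) = tsum r (fun i => delta (f i)).
Proof.
rewrite /tsum; elim: r => [|i r IH]; first by rewrite !big_nil delta0.
by rewrite !big_cons deltaD IH.
Qed.

Definition homogeneous x (n : int) := delta x = etens x n.

Lemma homogeneousE x n k : homogeneous x n -> delta x k = if k == n then x else 0.
Proof. by move=> ->; rewrite etensE. Qed.

Lemma homogeneousM x y m n : homogeneous x m -> homogeneous y n -> homogeneous (x * y) (m + n).
Proof. by rewrite /homogeneous deltaM => -> ->; rewrite tmul_etens. Qed.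

Lemma homogeneousS x n : homogeneous x n -> homogeneous (s x) (- n).
Proof. by rewrite /homogeneous deltaS => ->; rewrite (tstar_etens starD). Qed.

Definition graded x := (forall n, homogeneous (delta x n) n) /\ isum (delta x) = x.

Lemma graded_homogeneous x n : homogeneous x n -> graded x.
Proof.
move=> xn; split=> [k|].
  by rewrite /homogeneous (homogeneousE _ xn); case: eqP => [->//|_]; rewrite delta0 etens0.
rewrite (isum1 (c := n)); first by rewrite (homogeneousE _ xn) eqxx.
by move=> k /negbTE kn; rewrite (homogeneousE _ xn) kn.
Qed.

Lemma gradedD x y : graded x -> graded y -> graded (x + y).
Proof.
move=> [hx sx] [hy sy]; split=> [n|].
  by rewrite /homogeneous deltaD taddE deltaD hx hy tadd_etens.
rewrite -{2}sx -{2}sy -(isumD (tens_supported _) (tens_supported _)).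
by apply: eq_isum => n; rewrite deltaD taddE.
Qed.

Lemma gradedZ c x : graded x -> graded (c *: x).
Proof.
move=> [hx sx]; split=> [n|].
  by rewrite /homogeneous deltaZ tscaleE deltaZ hx tscale_etens.
rewrite -{2}sx -(isum_morph (scalerDr c) (tens_supported _)).
by apply: eq_isum => n; rewrite deltaZ tscaleE.
Qed.

Lemma gradedS x : graded x -> graded (s x).
Proof.
move=> [hx sx]; split=> [n|].
  by rewrite /homogeneous deltaS (tstarE starD) deltaS hx (tstar_etens starD) opprK.
have sx_supp : supported_on (fun n => s (delta x n)) (finsupp (delta x)).
  by move=> n /tens_dflt ->; rewrite (star0 starD).
rewrite -{2}sx -(isum_morph starD (tens_supported _)).
rewrite -(isum_reindex (h := -%R) opprK opprK sx_supp).
by apply: eq_isum => n; rewrite deltaS (tstarE starD).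
Qed.

Lemma gradedM x y : graded x -> graded y -> graded (x * y).
Proof.
move=> [hx sx] [hy sy].
have supp_xy n : supported_on (fun i => delta x i * delta y (n - i)) (finsupp (delta x)).
  by move=> i /tens_dflt ->; rewrite mul0r.
split=> [n|].
  rewrite /homogeneous deltaM tmulE (isumE_uniq (supp_xy n) (fset_uniq _)) delta_sum.
  rewrite -tsum_etens; congr tsum; apply: funext => i.
  by rewrite deltaM hx hy tmul_etens (addrC i) subrK.
rewrite (eq_isum (g := fun n => isum (fun i => delta x i * delta y (n - i)))); last first.
  by move=> n; rewrite deltaM tmulE.
rewrite (exchange_isum (r1 := [seq i + j | i <- finsupp (delta x), j <- finsupp (delta y)])
                       (r2 := finsupp (delta x))); first last.
- by move=> n i /tens_dflt ->; rewrite mul0r.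
- move=> n i nxy.
  case: (boolP (i \in finsupp (delta x))) => [ix|/tens_dflt ->]; last by rewrite mul0r.
  case: (boolP (n - i \in finsupp (delta y))) => [iy|/tens_dflt ->]; last by rewrite mulr0.
  by move: nxy; rewrite -[n](subrK i) addrC allpairs_f.
have shift i : isum (fun n => delta x i * delta y (n - i)) = delta x i * y.
  have supp_y : supported_on (fun n => delta x i * delta y n) (finsupp (delta y)).
    by move=> n /tens_dflt ->; rewrite mulr0.
  rewrite (isum_reindex (h := fun n => n - i) (h' := fun n => n + i) (subrK i) (addrK i) supp_y).
  by rewrite -{2}sy -(isum_morph (mulrDr (delta x i)) (tens_supported _)).
by rewrite (eq_isum shift) -{2}sx -(isum_morph (fun u v => mulrDl u v y) (tens_supported _)).
Qed.

Definition graded_pred : {pred A} := fun x => `[< graded x >].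

Lemma graded_subalg_closed : GRing.subsemialg_closed graded_pred.
Proof.
have homogeneous0 : homogeneous 0 0 by rewrite /homogeneous delta0 etens0.
split.
- exact/asboolP/(graded_homogeneous delta1).
- split; first exact/asboolP/(graded_homogeneous homogeneous0).
  by move=> x y /asboolP gx /asboolP gy; apply/asboolP/gradedD.
- by move=> c x /asboolP gx; apply/asboolP/gradedZ.
- by move=> x y /asboolP gx /asboolP gy; apply/asboolP/gradedM.
Qed.

HB.instance Definition _ := GRing.isSubalgClosed.Build R[i] A graded_pred graded_subalg_closed.
Record graded_subalg := GradedSubalg { graded_val : A; _ : graded_val \in graded_pred }.
HB.instance Definition _ := [isSub for graded_val].
HB.instance Definition _ := [Choice of graded_subalg by <:].
HB.instance Definition _ := [SubChoice_isSubAlgebra of graded_subalg by <:].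

Lemma graded_predS x : x \in graded_pred -> s x \in graded_pred.
Proof. by move=> /asboolP gx; apply/asboolP/gradedS. Qed.

Definition graded_star (u : graded_subalg) := GradedSubalg (graded_predS (valP u)).

Lemma graded_a : a \in graded_pred. Proof. exact/asboolP/(graded_homogeneous delta_a). Qed.
Lemma graded_b : b \in graded_pred. Proof. exact/asboolP/(graded_homogeneous delta_b). Qed.

(* The graded elements form a *-subalgebra containing [a] and [b]; by the universal
   property the inclusion has a *-algebra section fixing [a] and [b], which must
   be the identity of [A]. *)
Lemma all_graded x : graded x.
Proof.
have [sstar rel univ_prop] := univ.
have star_sub : is_star graded_star.
  by case: sstar => sD sZ sM sK; split=> *; apply: val_inj; rewrite /= ?sD ?sZ ?sM ?sK.
have rel_sub : S3_rel p q th graded_star (GradedSubalg graded_a) (GradedSubalg graded_b).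
  by case: rel => *; split; apply: val_inj.
have [[f [[fD fZ fM f1 fS] [fa fb]]] _] := univ_prop _ _ _ _ star_sub rel_sub.
have [_ uniq_morph] := univ_prop _ _ _ _ sstar rel.
have val_f : is_star_morph s s (graded_val \o f).
  by split=> *; rewrite /= ?fD ?fZ ?fM ?f1 ?fS.
have id_morph : is_star_morph s s id by [].
have := uniq_morph _ _ val_f id_morph; rewrite /= fa fb => /(_ erefl erefl x) <-.
exact/asboolP/(valP (f x)).
Qed.

Lemma delta_homogeneous x n : homogeneous (delta x n) n.
Proof. by case: (all_graded x). Qed.

Lemma isum_delta x : isum (delta x) = x.
Proof. by case: (all_graded x). Qed.

Local Notation T := (tens A).
Implicit Types F G H : T.

Lemma tens_decomp F : F = tsum (finsupp F) (fun m =>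
  tsum (finsupp (delta (F m))) (fun n => etens (delta (F m) n) m)).
Proof.
apply: tensP => k; rewrite tsumE; under eq_bigr do rewrite tsum_etens.
rewrite -(isumE_uniq _ (fset_uniq _)); last first.
  by move=> m /tens_dflt ->; rewrite big1 ?etens0 ?tzeroE // => n _; rewrite delta0E.
rewrite (isum1 (c := k)) => [|m mk]; last by rewrite etensE eq_sym (negbTE mk).
by rewrite etensE eqxx -(isumE_uniq (tens_supported _) (fset_uniq _)) isum_delta.
Qed.

Lemma graded_tens_ind (P : T -> Prop) (Q : int -> int -> bool) :
  P (tzero A) -> (forall F G, P F -> P G -> P (tadd F G)) ->
  (forall x m n, homogeneous x n -> Q m n -> P (etens x m)) ->
  forall F, (forall m n, ~~ Q m n -> delta (F m) n = 0) -> P F.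
Proof.
move=> P0 PD Pe F FQ; rewrite (tens_decomp F).
apply: tsum_ind => // m; apply: tsum_ind => // n.
have [Qmn|nQmn] := boolP (Q m n); first exact: Pe (delta_homogeneous _ _) Qmn.
by rewrite FQ // etens0.
Qed.

Lemma tens_ind (P : T -> Prop) :
  P (tzero A) -> (forall F G, P F -> P G -> P (tadd F G)) ->
  (forall x m n, homogeneous x n -> P (etens x m)) -> forall F, P F.
Proof. by move=> P0 PD Pe F; apply: (graded_tens_ind (Q := fun _ _ => true)) => // x m n /Pe. Qed.

(** * The Z/NZ-fixed tensors *)

Variable N : nat.
Hypothesis N_gt0 : (0 < N)%N.

Lemma alphaE z x : alpha delta z x = isum (fun n => z ^ n *: delta x n).
Proof.
rewrite /alpha (isumE_uniq _ (fset_uniq (finsupp (delta x)))) // => n /tens_dflt ->.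
by rewrite scaler0.
Qed.

Lemma alpha0 z : alpha delta z 0 = 0.
Proof. by rewrite alphaE -[RHS]isum0; apply: eq_isum => n; rewrite delta0E scaler0. Qed.

Lemma alphaD z x y : alpha delta z (x + y) = alpha delta z x + alpha delta z y.
Proof.
have supp x' : supported_on (fun n => z ^ n *: delta x' n) (finsupp (delta x')).
  by move=> n /tens_dflt ->; rewrite scaler0.
by rewrite !alphaE -(isumD (supp x) (supp y)); apply: eq_isum => n; rewrite deltaD taddE scalerDr.
Qed.

Lemma alpha_homogeneous z x n : homogeneous x n -> alpha delta z x = z ^ n *: x.
Proof.
move=> xn; rewrite alphaE (isum1 (c := n)) => [|j /negbTE jn].
  by rewrite (homogeneousE _ xn) eqxx.
by rewrite (homogeneousE _ xn) jn scaler0.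
Qed.

Lemma delta_alpha z x n : delta (alpha delta z x) n = z ^ n *: delta x n.
Proof.
have supp : supported_on (fun j => z ^ j *: delta x j) (finsupp (delta x)).
  by move=> j /tens_dflt ->; rewrite scaler0.
rewrite alphaE (isumE_uniq supp (fset_uniq _)) delta_sum tsumE.
rewrite -(isumE_uniq (f := fun j => delta (z ^ j *: delta x j) n)) ?fset_uniq //; last first.
  by move=> j /tens_dflt ->; rewrite scaler0 delta0E.
rewrite (isum1 (c := n)) => [|j jn];
  rewrite deltaZ tscaleE (homogeneousE _ (delta_homogeneous _ _)).
  by rewrite eqxx.
by rewrite eq_sym (negbTE jn) scaler0.
Qed.

Lemma talphaE z F k : talpha delta z F k = z ^ (- k) *: alpha delta z (F k).
Proof. by rewrite fsfunE; case: ifP => // /negbT /tens_dflt ->; rewrite alpha0 scaler0. Qed.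

Lemma talpha_etens z x m n : homogeneous x n ->
  talpha delta z (etens x m) = etens ((z ^ (- m) * z ^ n) *: x) m.
Proof.
move=> xn; apply: tensP => k; rewrite talphaE !etensE.
by case: eqP => [->|_]; rewrite ?(alpha_homogeneous _ xn) ?scalerA ?alpha0 ?scaler0.
Qed.

Lemma fixed0 : fixed delta N (tzero A).
Proof. by move=> k; apply: tensP => m; rewrite talphaE !tzeroE alpha0 scaler0. Qed.

Lemma fixedD F G : fixed delta N F -> fixed delta N G -> fixed delta N (tadd F G).
Proof.
move=> FN GN k; apply: tensP => m.
by rewrite talphaE !taddE alphaD scalerDr -!talphaE FN GN.
Qed.

Lemma fixed_etens x m n : homogeneous x n -> (N%:Z %| m - n)%Z -> fixed delta N (etens x m).
Proof.
move=> xn Nmn k; rewrite (talpha_etens _ _ xn) -exprzDr ?zeta_unit // addrC.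
by rewrite zeta_expz_dvd ?scale1r // -opprB rpredN.
Qed.

Lemma fixed_delta_vanish F m n : fixed delta N F -> ~~ (N%:Z %| m - n)%Z ->
  delta (F m) n = 0.
Proof.
move=> FN; rewrite -rpredN opprB => Nnm; have N_gt1 : (1 < N)%N.
  by case: N N_gt0 Nnm => [|[|]] //; rewrite dvd1z.
have := congr1 (fun G => delta (G m) n) (FN (Ordinal N_gt1)).
rewrite /= talphaE deltaZ tscaleE delta_alpha scalerA -exprzDr ?zeta_unit // addrC.
move=> /eqP; rewrite -subr_eq0 -{2}[delta (F m) n]scale1r -scalerBl scaler_eq0 subr_eq0.
by rewrite (negbTE (zeta1_expz_ndvd R N_gt0 Nnm)) => /eqP.
Qed.

Lemma fixed_ind (P : T -> Prop) :
  P (tzero A) -> (forall F G, P F -> P G -> P (tadd F G)) ->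
  (forall x m n, homogeneous x n -> (N%:Z %| m - n)%Z -> P (etens x m)) ->
  forall F, fixed delta N F -> P F.
Proof.
move=> P0 PD Pe F FN; apply: (graded_tens_ind P0 PD Pe) => m n.
exact: fixed_delta_vanish.
Qed.

(** * The maps phi and phi^-1 *)

Section CoefficientTransform.
Variables (e : int -> int -> int) (f : T -> T).
Hypothesis fE : forall F k, f F k = isum (fun m => delta (F m) (e k m)).

Let supp F k : supported_on (fun m => delta (F m) (e k m)) (finsupp F).
Proof. by move=> m /tens_dflt ->; rewrite delta0E. Qed.

Lemma transform0 : f (tzero A) = tzero A.
Proof.
apply: tensP => k; rewrite fE tzeroE -[RHS]isum0.
by apply: eq_isum => m; rewrite tzeroE delta0E.
Qed.

Lemma transformD F G : f (tadd F G) = tadd (f F) (f G).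
Proof.
apply: tensP => k; rewrite taddE !fE -(isumD (@supp F k) (@supp G k)).
by apply: eq_isum => m; rewrite taddE deltaD taddE.
Qed.

Lemma transformZ c F : f (tscale c F) = tscale c (f F).
Proof.
apply: tensP => k; rewrite tscaleE !fE -(isum_morph (scalerDr c) (@supp F k)).
by apply: eq_isum => m; rewrite tscaleE deltaZ tscaleE.
Qed.

Lemma transform_etens x m n k : homogeneous x n ->
  f (etens x m) k = if e k m == n then x else 0.
Proof.
move=> xn; rewrite fE (isum1 (c := m)) => [|j jm]; first by rewrite etensE eqxx (homogeneousE _ xn).
by rewrite etensE (negbTE jm) delta0E.
Qed.

End CoefficientTransform.

Lemma phiE F k : phi delta N F k = isum (fun m => delta (F m) (k - N%:Z * m)).
Proof.
rewrite tsumE (isumE_uniq _ (fset_uniq (finsupp F))) => [|m /tens_dflt ->]; last first.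
  by rewrite delta0E.
by apply: eq_bigr => m _; rewrite tpsi_etens // tmul_etensr mulr1.
Qed.

Lemma phi_pre_E F k : phi_pre delta F k = isum (fun m => delta (F m) (m - k)).
Proof.
rewrite tsumE (isumE_uniq _ (fset_uniq (finsupp F))) => [|m /tens_dflt ->]; last first.
  by rewrite delta0E.
apply: eq_bigr => m _.
rewrite tsumE -(isumE_uniq _ (fset_uniq _)) => [|n /tens_dflt ->]; last first.
  by rewrite etensE if_same.
rewrite (isum1 (c := m - k)) => [|n nmk]; first by rewrite etensE opprB addrCA subrr addr0 eqxx.
by rewrite etensE; case: eqP => // kmn; case/eqP: nmk; rewrite kmn opprB addrCA subrr addr0.
Qed.

Lemma phi_invE F k : phi_inv delta N F k = isum (fun m => delta (F m) (m - N%:Z * k)).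
Proof. by rewrite tpsi_invE // phi_pre_E. Qed.

Lemma phi_etens x m n : homogeneous x n -> phi delta N (etens x m) = etens x (n + N%:Z * m).
Proof.
by move=> xn; apply: tensP => k; rewrite (transform_etens phiE _ _ xn) etensE subr_eq.
Qed.

Lemma phi_inv_etens x m n j : homogeneous x n -> m - n = N%:Z * j ->
  phi_inv delta N (etens x m) = etens x j.
Proof.
move=> xn mnj; apply: tensP => k; rewrite (transform_etens phi_invE _ _ xn) etensE.
have NZ0 : N%:Z != 0 by rewrite eqz_nat -lt0n.
congr (if _ then _ else _); apply/eqP/eqP => [|->]; last by rewrite -mnj opprB addrCA subrr addr0.
by move=> nkm; apply: (mulfI NZ0); rewrite -mnj -nkm opprB addrCA subrr addr0.
Qed.

Lemma phi_inv_etens_divz x m n : homogeneous x n -> (N%:Z %| m - n)%Z ->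
  phi_inv delta N (etens x m) = etens x ((m - n) %/ N%:Z)%Z.
Proof. by move=> xn Nmn; apply: (phi_inv_etens xn); rewrite mulrC divzK. Qed.

Lemma phi_pre_fixed F : fixed delta N F -> phi_pre delta F = tpsi N (phi_inv delta N F).
Proof.
move=> FN; apply: tensP => k; rewrite tpsiE // phi_pre_E.
case: ifP => [/divzK {1}<-|/negbT Nk]; first by rewrite phi_invE mulrC.
rewrite -[RHS]isum0; apply: eq_isum => m; apply: fixed_delta_vanish => //.
by rewrite opprB addrCA subrr addr0.
Qed.

Lemma phi_fixed F : fixed delta N (phi delta N F).
Proof.
elim/tens_ind: F => [|F G FN GN|x m n xn].
- by rewrite (transform0 phiE); apply: fixed0.
- by rewrite (transformD phiE); apply: fixedD.
rewrite (phi_etens _ xn); apply: (fixed_etens xn).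
by rewrite addrAC subrr add0r dvdz_mulr.
Qed.

Lemma phiM F G : phi delta N (tmul F G) = tmul (phi delta N F) (phi delta N G).
Proof.
move: F; elim/tens_ind: G => [|G H IHG IHH|y m' n' yn'] F.
- by rewrite tmul0r (transform0 phiE) tmul0r.
- by rewrite tmulDr !(transformD phiE) IHG IHH tmulDr.
elim/tens_ind: F => [|F G IHF IHG|x m n xn].
- by rewrite !tmul0l (transform0 phiE) tmul0l.
- by rewrite tmulDl !(transformD phiE) IHF IHG tmulDl.
rewrite tmul_etens (phi_etens _ (homogeneousM xn yn')) (phi_etens _ xn) (phi_etens _ yn').
rewrite tmul_etens.
by congr etens; ring.
Qed.

Lemma phiS F : phi delta N (tstar s F) = tstar s (phi delta N F).
Proof.
elim/tens_ind: F => [|F G IHF IHG|x m n xn].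
- by rewrite (tstar0 starD) (transform0 phiE) (tstar0 starD).
- by rewrite (tstarD starD) !(transformD phiE) IHF IHG (tstarD starD).
rewrite (tstar_etens starD) (phi_etens _ (homogeneousS xn)) (phi_etens _ xn).
rewrite (tstar_etens starD).
by congr etens; ring.
Qed.

Lemma phi_invK F : phi_inv delta N (phi delta N F) = F.
Proof.
elim/tens_ind: F => [|F G IHF IHG|x m n xn].
- by rewrite (transform0 phiE) (transform0 phi_invE).
- by rewrite (transformD phiE) (transformD phi_invE) IHF IHG.
by rewrite (phi_etens _ xn) (phi_inv_etens (j := m) xn) // [n + _]addrC addrK.
Qed.


Lemma phiK G : fixed delta N G -> phi delta N (phi_inv delta N G) = G.
Proof.
move: G; apply: fixed_ind => [|F G IHF IHG|x m n xn Nmn].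
- by rewrite (transform0 phi_invE) (transform0 phiE).
- by rewrite (transformD phi_invE) (transformD phiE) IHF IHG.
by rewrite (phi_inv_etens_divz xn Nmn) (phi_etens _ xn) mulrC divzK // addrC subrK.
Qed.

Lemma phi_invM F G : fixed delta N F -> fixed delta N G ->
  phi_inv delta N (tmul F G) = tmul (phi_inv delta N F) (phi_inv delta N G).
Proof.
move=> + GN; move: G GN F; apply: fixed_ind => [|G H IHG IHH|y m' n' yn' Nmn'] F.
- by rewrite tmul0r (transform0 phi_invE) tmul0r.
- by move=> FN; rewrite tmulDr !(transformD phi_invE) IHG // IHH // tmulDr.
move: F; apply: fixed_ind => [|F G IHF IHG|x m n xn Nmn].
- by rewrite tmul0l (transform0 phi_invE) tmul0l.
- by rewrite tmulDl !(transformD phi_invE) IHF IHG tmulDl.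
rewrite tmul_etens (phi_inv_etens_divz xn Nmn) (phi_inv_etens_divz yn' Nmn') tmul_etens.
apply: (phi_inv_etens (homogeneousM xn yn')).
by rewrite mulrDr !(mulrC N%:Z) !divzK //; ring.
Qed.

Lemma phi_invS F : fixed delta N F -> phi_inv delta N (tstar s F) = tstar s (phi_inv delta N F).
Proof.
move: F; apply: fixed_ind => [|F G IHF IHG|x m n xn Nmn].
- by rewrite (tstar0 starD) (transform0 phi_invE) (tstar0 starD).
- by rewrite (tstarD starD) !(transformD phi_invE) IHF IHG (tstarD starD).
rewrite (tstar_etens starD) (phi_inv_etens_divz xn Nmn) (tstar_etens starD).
apply: (phi_inv_etens (homogeneousS xn)).
by rewrite mulrN mulrC divzK //; ring.
Qed.

Lemma phi_tmorph : is_tmorph s (fun=> True) (phi delta N).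
Proof.
split=> [F G _ _|c F _|F G _ _||F _]; rewrite ?(transformD phiE) ?(transformZ phiE) ?phiM ?phiS //.
by rewrite (phi_etens _ delta1) mulr0 addr0.
Qed.

Lemma phi_inv_tmorph : is_tmorph s (fixed delta N) (phi_inv delta N).
Proof.
split=> [F G _ _|c F _|F G FN GN||F FN];
  rewrite ?(transformD phi_invE) ?(transformZ phi_invE) ?phi_invM ?phi_invS //.
by rewrite (phi_inv_etens (j := 0) delta1) // subrr mulr0.
Qed.

End Coaction.

Unset Implicit Arguments. Set Strict Implicit.

Theorem mainTheorem11 (R : realType) (p q th : R) (N : nat)
  (A : algType R[i]) (s : A -> A) (a b : A) (delta : A -> tens A) :
  0 <= p < 1 -> 0 <= q < 1 -> 0 < th < 1 -> irrational th -> (0 < N)%N ->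
  is_universal_S3 p q th s a b ->
  is_coaction s a b delta ->
  (forall F, fixed delta N F -> exists H, phi_pre delta F = tpsi N H) /\
  (forall F, fixed delta N (phi delta N F)) /\
  is_tmorph s (fun _ => True) (phi delta N) /\
  is_tmorph s (fixed delta N) (phi_inv delta N) /\
  (forall F, phi_inv delta N (phi delta N F) = F) /\
  (forall G, fixed delta N G -> phi delta N (phi_inv delta N G) = G).
Proof.
move=> _ _ _ _ N_gt0 univ coac; split.
  by move=> F FN; exists (phi_inv delta N F); exact (phi_pre_fixed univ coac N_gt0 FN).
split; first exact (phi_fixed univ coac N_gt0).
split; first exact (phi_tmorph univ coac N_gt0).
split; first exact (phi_inv_tmorph univ coac N_gt0).
split; first exact (phi_invK univ coac N_gt0).
exact (phiK univ coac N_gt0).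
Qed.
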